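(* Let $\Delta$ be the root system of a simple complex Lie algebra, with simple roots $\Pi$ and highest root $\theta$. Let $\alpha\in\Pi$ and let $i,j\ge 1$ be integers with $i+j\le\mathrm{ht}_\alpha(\theta)$. Then for any $\mu\in\Delta_\alpha(i)$ there is $\nu\in\Delta_\alpha(j)$ such that $\mu+\nu\in\Delta_\alpha(i+j)$ (in particular $\mu+\nu$ is a root).
   Context: For $\mu=\sum_{\beta\in\Pi}c_\beta\beta$, $\mathrm{ht}_\alpha(\mu)=c_\alpha$, and $\Delta_\alpha(i)=\{\gamma\in\Delta\mid\mathrm{ht}_\alpha(\gamma)=i\}$. *)

(* Root systems of simple complex Lie algebras, modelled as
   irreducible reduced crystallographic root systems in a Euclidean space R^n. *)
From HB Require Import structures.
From mathcomp Require Import all_boot all_order all_algebra.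
Set Implicit Arguments. Unset Strict Implicit. Unset Printing Implicit Defensive.
Import Order.TTheory GRing.Theory Num.Theory.
Local Open Scope ring_scope.

Section RootSystems.
Variables (R : realFieldType) (n : nat).

Definition dotv (u v : 'rV[R]_n) : R := (u *m v^T) 0 0.

Definition cartan (b a : 'rV[R]_n) : R := 2 * dotv b a / dotv a a.

Definition is_irred_root_system (Delta : seq 'rV[R]_n) : Prop :=
  [/\ Delta != [::], 0 \notin Delta &
      (forall v : 'rV[R]_n, exists c : 'I_(size Delta) -> R,
          v = \sum_(k < size Delta) c k *: Delta`_k)] /\
  [/\ (forall a b, a \in Delta -> b \in Delta -> b - cartan b a *: a \in Delta),
      (forall a b, a \in Delta -> b \in Delta -> exists z : int, cartan b a = z%:~R),
      (forall a (c : R), a \in Delta -> c *: a \in Delta -> c = 1 \/ c = -1)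
    & (forall P : pred 'rV[R]_n,
         (exists2 a, a \in Delta & P a) -> (exists2 b, b \in Delta & ~~ P b) ->
         exists a b, [/\ a \in Delta, b \in Delta, P a, ~~ P b & dotv a b != 0])].

Definition is_base (Delta : seq 'rV[R]_n) (l : nat) (pi : 'I_l -> 'rV[R]_n) : Prop :=
  [/\ (forall k, pi k \in Delta),
      (forall c : 'I_l -> R, \sum_k c k *: pi k = 0 -> forall k, c k = 0)
    & (forall g, g \in Delta -> exists c : 'I_l -> int,
          g = \sum_k (c k)%:~R *: pi k /\
          ((forall k, 0 <= c k) \/ (forall k, c k <= 0)))].

(* ht_alpha(mu) = h, where alpha = pi a: the coefficient of pi a in the
   (unique, by linear independence) expansion of mu in the simple roots. *)
Definition ht_eq (l : nat) (pi : 'I_l -> 'rV[R]_n) (a : 'I_l) (mu : 'rV[R]_n) (h : int) : Prop :=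
  exists c : 'I_l -> int, mu = \sum_k (c k)%:~R *: pi k /\ c a = h.

Definition is_highest_root (Delta : seq 'rV[R]_n) (l : nat) (pi : 'I_l -> 'rV[R]_n)
  (theta : 'rV[R]_n) : Prop :=
  theta \in Delta /\
  forall g, g \in Delta -> exists c : 'I_l -> int,
    theta - g = \sum_k (c k)%:~R *: pi k /\ (forall k, 0 <= c k).

End RootSystems.

(** Let [S] be the sum of all roots of [alpha]-height [m].  A simple
    reflection [s_beta], [beta <> alpha], preserves [alpha]-heights, so it
    permutes these roots and [S] is orthogonal to [beta]; hence
    [(S, v) = ht_alpha(v) (S, alpha)] for every [v].  If the level [m > 0] is
    nonempty, [S] has positive height, so [(S, S) > 0] forces [(S, alpha) > 0]
    and then [(S, mu) > 0] whenever [ht_alpha(mu) > 0]: some root [g] of height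
    [m] satisfies [(g, mu) > 0], and therefore [g - mu] is a root.  Taking
    [mu = alpha] shows, by descending induction from [theta], that every level
    between [1] and [ht_alpha(theta)] is nonempty; taking [m = i + j] and
    [nu = g - mu] gives the theorem. *)
From mathcomp Require Import all_boot all_order all_algebra.
From mathcomp Require Import ring lra zify boolp.
Set Implicit Arguments.
Unset Strict Implicit.
Unset Printing Implicit Defensive.
Import Order.TTheory GRing.Theory Num.Theory.
Local Open Scope ring_scope.

Section RootSystems.
Variables (R : realFieldType) (n : nat).
Implicit Types u v w : 'rV[R]_n.

Lemma dotvE u v : dotv u v = \sum_k u 0 k * v 0 k.
Proof. by rewrite /dotv mxE; apply: eq_bigr => k _; rewrite mxE. Qed.

Lemma dotvC u v : dotv u v = dotv v u.
Proof. by rewrite !dotvE; apply: eq_bigr => k _; rewrite mulrC. Qed.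

Lemma dotv0l w : dotv 0 w = 0.
Proof. by rewrite dotvE big1 // => k _; rewrite mxE mul0r. Qed.

Lemma dotvDl u v w : dotv (u + v) w = dotv u w + dotv v w.
Proof. by rewrite !dotvE -big_split; apply: eq_bigr => k _; rewrite mxE mulrDl. Qed.

Lemma dotvZl c u w : dotv (c *: u) w = c * dotv u w.
Proof. by rewrite !dotvE mulr_sumr; apply: eq_bigr => k _; rewrite mxE mulrA. Qed.

Lemma dotvBl u v w : dotv (u - v) w = dotv u w - dotv v w.
Proof. by rewrite dotvDl -scaleN1r dotvZl mulN1r. Qed.

Lemma dotvZr c u w : dotv w (c *: u) = c * dotv w u.
Proof. by rewrite dotvC dotvZl dotvC. Qed.

Lemma dotvBr u v w : dotv w (u - v) = dotv w u - dotv w v.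
Proof. by rewrite dotvC dotvBl !(dotvC w). Qed.

Lemma dotv_suml I (r : seq I) (F : I -> 'rV[R]_n) w :
  dotv (\sum_(i <- r) F i) w = \sum_(i <- r) dotv (F i) w.
Proof. exact: (big_morph (fun u => dotv u w) (fun u v => dotvDl u v w) (dotv0l w)). Qed.

Lemma dotv_sumr I (r : seq I) (F : I -> 'rV[R]_n) w :
  dotv w (\sum_(i <- r) F i) = \sum_(i <- r) dotv w (F i).
Proof. by rewrite dotvC dotv_suml; apply: eq_bigr => i _; rewrite dotvC. Qed.

Lemma dotvv_ge0 u : 0 <= dotv u u.
Proof. by rewrite dotvE sumr_ge0 // => k _; rewrite -expr2 sqr_ge0. Qed.

Lemma dotvv_eq0 u : (dotv u u == 0) = (u == 0).
Proof.
apply/idP/eqP => [|->]; last by rewrite dotv0l.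
rewrite dotvE psumr_eq0 => [/allP u0|k _]; last by rewrite -expr2 sqr_ge0.
apply/rowP => k; have := u0 k (mem_index_enum k).
by rewrite -expr2 sqrf_eq0 mxE => /eqP.
Qed.

Lemma dotvv_gt0 u : u != 0 -> 0 < dotv u u.
Proof. by move=> u0; rewrite lt_def dotvv_eq0 u0 dotvv_ge0. Qed.

Lemma cartanK u v : v != 0 -> cartan u v * dotv v v = 2 * dotv u v.
Proof. by move=> v0; rewrite /cartan mulfVK // dotvv_eq0. Qed.

Definition reflection v u := u - cartan u v *: v.

Lemma dotv_reflection u v : v != 0 -> dotv (reflection v u) v = - dotv u v.
Proof. by move=> v0; rewrite dotvBl dotvZl cartanK //; ring. Qed.

Lemma reflectionK v : v != 0 -> involutive (reflection v).
Proof.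
move=> v0 u; have cartanN : cartan (reflection v u) v = - cartan u v.
  by rewrite /cartan dotv_reflection // mulrN mulNr.
by rewrite /reflection cartanN scaleNr opprK subrK.
Qed.

Lemma reflection_self v : v != 0 -> reflection v v = - v.
Proof.
move=> v0; rewrite /reflection /cartan mulfK ?dotvv_eq0 //.
by rewrite scaler_nat mulr2n opprD addNKr.
Qed.

Section Heights.
Variables (l : nat) (pi : 'I_l -> 'rV[R]_n) (a : 'I_l).
Hypothesis pi_free : forall c : 'I_l -> R, \sum_k c k *: pi k = 0 -> forall k, c k = 0.

Lemma ht_eq_uniq v h1 h2 : ht_eq pi a v h1 -> ht_eq pi a v h2 -> h1 = h2.
Proof.
move=> [c1 [-> <-]] [c2 [e <-]].
have := @pi_free (fun k => (c1 k - c2 k)%:~R).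
under eq_bigr => k _ do rewrite intrB scalerBl.
rewrite sumrB e subrr => /(_ erefl a) /eqP.
by rewrite intrB subr_eq0 eqr_int => /eqP.
Qed.

Lemma ht_eq0 : ht_eq pi a 0 0.
Proof. by exists (fun=> 0); split => //; rewrite big1 // => k _; rewrite scale0r. Qed.

Lemma ht_eqD u v h1 h2 :
  ht_eq pi a u h1 -> ht_eq pi a v h2 -> ht_eq pi a (u + v) (h1 + h2).
Proof.
move=> [c1 [-> <-]] [c2 [-> <-]]; exists (fun k => c1 k + c2 k); split => //.
by rewrite -big_split; apply: eq_bigr => k _; rewrite intrD scalerDl.
Qed.

Lemma ht_eqZ u h z : ht_eq pi a u h -> ht_eq pi a (z%:~R *: u) (z * h).
Proof.
move=> [c [-> <-]]; exists (fun k => z * c k); split => //.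
by rewrite scaler_sumr; apply: eq_bigr => k _; rewrite scalerA intrM.
Qed.

Lemma ht_eqN u h : ht_eq pi a u h -> ht_eq pi a (- u) (- h).
Proof.
move=> [c [-> <-]]; exists (fun k => - c k); split => //.
by rewrite -sumrN; apply: eq_bigr => k _; rewrite intrN scaleNr.
Qed.

Lemma ht_eqB u v h1 h2 :
  ht_eq pi a u h1 -> ht_eq pi a v h2 -> ht_eq pi a (u - v) (h1 - h2).
Proof. by move=> hu /ht_eqN; apply: ht_eqD. Qed.

Lemma ht_eq_sum I (r : seq I) (P : pred I) (F : I -> 'rV[R]_n) (h : I -> int) :
  (forall i, P i -> ht_eq pi a (F i) (h i)) ->
  ht_eq pi a (\sum_(i <- r | P i) F i) (\sum_(i <- r | P i) h i).
Proof.
move=> hF; apply: (big_ind2 (ht_eq pi a)) => //; first exact: ht_eq0.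
by move=> u1 h1 u2 h2; apply: ht_eqD.
Qed.

Lemma ht_eq_simple b : ht_eq pi a (pi b) (b == a)%:R.
Proof.
exists (fun k => (k == b)%:R); split; last by rewrite eq_sym.
rewrite (bigD1 b) //= eqxx scale1r big1 ?addr0 // => k /negbTE ->.
by rewrite scale0r.
Qed.

End Heights.

Section Roots.
Variable Delta : seq 'rV[R]_n.
Hypothesis Delta_neq0 : 0 \notin Delta.
Hypothesis Delta_reflection :
  forall u v, u \in Delta -> v \in Delta -> reflection u v \in Delta.
Hypothesis Delta_cartan_int :
  forall u v, u \in Delta -> v \in Delta -> exists z : int, cartan v u = z%:~R.

Lemma root_neq0 v : v \in Delta -> v != 0.
Proof. by apply: contraTneq => ->. Qed.

Lemma rootN v : v \in Delta -> - v \in Delta.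
Proof. by move=> vD; rewrite -reflection_self ?root_neq0 //; apply: Delta_reflection. Qed.

Lemma rootB u v : u \in Delta -> v \in Delta -> 0 < dotv u v -> u != v ->
  u - v \in Delta.
Proof.
move=> uD vD uv_gt0 neq_uv.
have [z1 cartan_uv] := Delta_cartan_int vD uD.
have [z2 cartan_vu] := Delta_cartan_int uD vD.
have [z1_1|z1_neq1] := eqVneq z1 1.
  by have := Delta_reflection vD uD; rewrite /reflection cartan_uv z1_1 scale1r.
have [z2_1|z2_neq1] := eqVneq z2 1.
  have := rootN (Delta_reflection uD vD).
  by rewrite /reflection cartan_vu z2_1 scale1r opprB.
have := cartanK u (root_neq0 vD); have := cartanK v (root_neq0 uD).
rewrite cartan_uv cartan_vu (dotvC v u) => e2 e1.
have uu_gt0 := dotvv_gt0 (root_neq0 uD); have vv_gt0 := dotvv_gt0 (root_neq0 vD).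
have ge2 z : 0 < z%:~R :> R -> z != 1 -> 2 <= z%:~R :> R.
  by rewrite ltr0z => *; rewrite (ler_int R 2); lia.
have {z1_neq1}z1_ge2 : 2 <= z1%:~R :> R by apply: ge2 => //; nra.
have {z2_neq1}z2_ge2 : 2 <= z2%:~R :> R by apply: ge2 => //; nra.
(* Both Cartan integers are >= 2, so 2 (u, v) dominates (u, u) and (v, v). *)
have : dotv (u - v) (u - v) <= 0 by rewrite !dotvBl !dotvBr (dotvC v u); nra.
by rewrite le_eqVlt ltNge dotvv_ge0 orbF dotvv_eq0 subr_eq0 (negbTE neq_uv).
Qed.

Variables (l : nat) (pi : 'I_l -> 'rV[R]_n) (a : 'I_l).
Hypothesis pi_free : forall c : 'I_l -> R, \sum_k c k *: pi k = 0 -> forall k, c k = 0.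
Hypothesis pi_root : forall k, pi k \in Delta.

Lemma ht_eq_reflection b g h : b != a -> g \in Delta -> ht_eq pi a g h ->
  ht_eq pi a (reflection (pi b) g) h.
Proof.
move=> ba gD hg; have [z cartan_z] := Delta_cartan_int (pi_root b) gD.
have := ht_eqB hg (ht_eqZ z (ht_eq_simple pi a b)).
by rewrite /reflection cartan_z (negbTE ba) mulr0 subr0.
Qed.

Definition level (m : int) := [seq g <- undup Delta | `[< ht_eq pi a g m >]].

Lemma levelP m g : reflect (g \in Delta /\ ht_eq pi a g m) (g \in level m).
Proof.
rewrite mem_filter mem_undup andbC.
by apply: (iffP andP) => -[gD /asboolP]; split.
Qed.

Lemma level_uniq m : uniq (level m).
Proof. by rewrite filter_uniq ?undup_uniq. Qed.

Lemma perm_level_reflection m b : b != a ->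
  perm_eq (level m) (map (reflection (pi b)) (level m)).
Proof.
move=> ba; have reflK := reflectionK (root_neq0 (pi_root b)).
have level_refl g : g \in level m -> reflection (pi b) g \in level m.
  move=> /levelP[gD hg]; apply/levelP; split; first exact: Delta_reflection.
  exact: ht_eq_reflection.
apply: uniq_perm; rewrite ?level_uniq ?(map_inj_uniq (can_inj reflK)) ?level_uniq //.
move=> g; apply/idP/mapP => [gm|[g' g'm ->]]; last exact: level_refl.
by exists (reflection (pi b) g); rewrite ?reflK ?level_refl.
Qed.

Lemma dotv_level_sum_simple m b : b != a ->
  dotv (\sum_(g <- level m) g) (pi b) = 0.
Proof.
move=> ba; rewrite dotv_suml; set X := \sum_(g <- _) _.
have : X = - X.
  rewrite {1}/X (perm_big _ (perm_level_reflection m ba)) big_map -sumrN.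
  by apply: eq_bigr => g _; rewrite dotv_reflection ?root_neq0.
lra.
Qed.

Lemma dotv_level_sum m v h : ht_eq pi a v h ->
  dotv (\sum_(g <- level m) g) v = h%:~R * dotv (\sum_(g <- level m) g) (pi a).
Proof.
move=> [c [-> <-]]; rewrite dotv_sumr (bigD1 a) //= dotvZr.
rewrite [X in _ + X]big1 ?addr0 // => b ba.
by rewrite dotvZr dotv_level_sum_simple ?mulr0.
Qed.

Lemma ht_level_sum m : ht_eq pi a (\sum_(g <- level m) g) (m *+ size (level m)).
Proof.
have -> : m *+ size (level m) = \sum_(g <- level m | g \in level m) m.
  by rewrite -big_seq big_const_seq count_predT iter_addr_0.
by rewrite big_seq; apply: ht_eq_sum => g /levelP[].
Qed.

Lemma exists_level_dotv_gt0 m g0 mu i : 0 < m -> g0 \in level m ->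
  0 < i -> ht_eq pi a mu i -> exists2 g, g \in level m & 0 < dotv g mu.
Proof.
move=> m_gt0 g0m i_gt0 hmu; set S := \sum_(g <- level m) g.
have ht_S_gt0 : 0 < m *+ size (level m).
  by rewrite pmulrn_lgt0 //; case: (level m) g0m.
have SS_gt0 : 0 < dotv S S.
  apply/dotvv_gt0/eqP => S0; have := ht_level_sum m; rewrite -/S S0.
  by move/(ht_eq_uniq pi_free (ht_eq0 pi a))/eqP; rewrite eq_sym gt_eqF.
have Sa_gt0 : 0 < dotv S (pi a).
  move: SS_gt0; rewrite (dotv_level_sum m (ht_level_sum m)).
  by rewrite pmulr_rgt0 // ltr0z.
have sum_gt0 : 0 < \sum_(g <- level m) dotv g mu.
  by rewrite -dotv_suml (dotv_level_sum m hmu) mulr_gt0 ?ltr0z.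
have /hasP[g gm g_mu] : has (fun g => 0 < dotv g mu) (level m).
  apply: contraLR sum_gt0 => /hasPn mu_le0.
  by rewrite -leNgt big_seq sumr_le0 // => g /mu_le0; rewrite -leNgt.
by exists g.
Qed.

Lemma exists_root_add (i j : int) mu g0 : 0 < i -> 0 < j ->
  mu \in Delta -> ht_eq pi a mu i -> g0 \in Delta -> ht_eq pi a g0 (i + j) ->
  exists nu, [/\ nu \in Delta, ht_eq pi a nu j,
                 mu + nu \in Delta & ht_eq pi a (mu + nu) (i + j)].
Proof.
move=> i_gt0 j_gt0 muD hmu g0D hg0.
have g0_level : g0 \in level (i + j) by apply/levelP.
have [g /levelP[gD hg] g_mu] :=
  exists_level_dotv_gt0 (addr_gt0 i_gt0 j_gt0) g0_level i_gt0 hmu.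
have neq_g_mu : g != mu.
  by apply/eqP => g_eq; move: hg; rewrite g_eq => /(ht_eq_uniq pi_free hmu); lia.
exists (g - mu); have -> : mu + (g - mu) = g by rewrite addrC subrK.
split => //; first exact: rootB.
by have := ht_eqB hg hmu; rewrite (addrC i) addrK.
Qed.

Lemma level_populated theta (H k : nat) : theta \in Delta -> ht_eq pi a theta H ->
  (0 < k <= H)%N -> exists2 g, g \in Delta & ht_eq pi a g k.
Proof.
move=> thetaD + /andP[k_gt0 kH]; rewrite -(subnK kH); move: (H - k)%N => d.
elim: d k k_gt0 {kH} => [|d IH] k k_gt0 htheta; first by exists theta.
move: htheta; rewrite addSnnS => /(IH k.+1 isT)[g gD]; rewrite intS => hg.
have ha : ht_eq pi a (pi a) 1 by have := ht_eq_simple pi a a; rewrite eqxx.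
have kZ_gt0 : 0 < k%:Z by rewrite ltz_nat.
by have [nu [nuD hnu _ _]] := exists_root_add ltr01 kZ_gt0 (pi_root a) ha gD hg; exists nu.
Qed.

End Roots.

End RootSystems.

Theorem corollary3p3 (R : realFieldType) (n : nat) (Delta : seq 'rV[R]_n)
  (l : nat) (pi : 'I_l -> 'rV[R]_n) (theta : 'rV[R]_n) (a : 'I_l)
  (i j : nat) (htheta : int) :
  is_irred_root_system Delta ->
  is_base Delta pi ->
  is_highest_root Delta pi theta ->
  ht_eq pi a theta htheta ->
  (1 <= i)%N -> (1 <= j)%N -> (i + j)%:Z <= htheta ->
  forall mu : 'rV[R]_n, mu \in Delta -> ht_eq pi a mu i%:Z ->
  exists nu : 'rV[R]_n,
    [/\ nu \in Delta, ht_eq pi a nu j%:Z,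
        mu + nu \in Delta & ht_eq pi a (mu + nu) (i + j)%:Z].
Proof.
move=> [[_ Delta_neq0 _] [Delta_refl Delta_int _ _]] [pi_root pi_free _] [thetaD _].
move=> htheta_theta i_gt0 j_gt0 ij_le mu muD hmu.
have [H htheta_H] : exists H : nat, htheta = H by exists `|htheta|%N; lia.
rewrite htheta_H in htheta_theta ij_le.
have ij_range : (0 < i + j <= H)%N by lia.
have [g0 g0D hg0] := level_populated Delta_neq0 Delta_refl Delta_int pi_free pi_root
  thetaD htheta_theta ij_range.
rewrite PoszD in hg0 *.
have iZ_gt0 : 0 < i%:Z by rewrite ltz_nat.
have jZ_gt0 : 0 < j%:Z by rewrite ltz_nat.
exact: (exists_root_add Delta_neq0 Delta_refl Delta_int pi_free pi_root
  iZ_gt0 jZ_gt0 muD hmu g0D hg0).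
Qed.
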